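(* Let $\alpha\in(0,1)$ be irrational, and for $n\ge1$ let $p_n/q_n$ be its $n$th convergent. Then $$P_{q_n}(\alpha)=\prod_{r=1}^{q_n}|2\sin\pi r\alpha|=A_nB_nC_n,$$ where $$A_n=|2q_n\sin(\pi\Lambda_n)|,\qquad B_n=\Big|\prod_{t=1}^{q_n-1}\frac{s_{nt}}{2\sin(\pi t/q_n)}\Big|,\qquad C_n=\prod_{t=1}^{q_n-1}\Big(1-\frac{s_{n0}^2}{s_{nt}^2}\Big)^{1/2}.$$ Here, for $t\in\{0,1,\ldots,q_n-1\}$, $$s_{nt}=2\sin\Big(\pi\Big[\frac t{q_n}-|\Lambda_n|\Big(\Big\{\frac{tq_{n-1}}{q_n}\Big\}-\frac12\Big)\Big]\Big).$$
   Context: $\alpha=[0;a_1,a_2,\ldots]$, with convergents given by $q_0=0$, $q_1=1$, $q_{n+1}=a_nq_n+q_{n-1}$ and $p_0=1$, $p_1=0$, $p_{n+1}=a_np_n+p_{n-1}$. $\Lambda_n=q_n\alpha-p_n$. $P_N(\alpha)=\prod_{r=1}^N|2\sin(\pi r\alpha)|$. $\{x\}$ denotes the fractional part of $x$. *)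

From Stdlib Require Import Reals ZArith.
Open Scope R_scope.

Fixpoint prodR (f : nat -> R) (N : nat) : R :=
  match N with
  | O => 1
  | S k => prodR f k * f (S k)
  end.

Fixpoint cf_rest (a : R) (n : nat) : R :=
  match n with
  | O => a
  | S k => frac_part (/ cf_rest a k)
  end.

(* partial quotients: a = [0; cf_digit a 1, cf_digit a 2, ...] *)
Definition cf_digit (a : R) (n : nat) : nat :=
  Z.to_nat (Int_part (/ cf_rest a (n - 1))).

(* pairs (q_n, q_{n+1}) with q_0 = 0, q_1 = 1, q_{n+1} = a_n q_n + q_{n-1} *)
Fixpoint cfq_pair (a : R) (n : nat) : nat * nat :=
  match n with
  | O => (0%nat, 1%nat)
  | S k => let (x, y) := cfq_pair a k in (y, (cf_digit a (S k) * y + x)%nat)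
  end.
Definition cf_q (a : R) (n : nat) : nat := fst (cfq_pair a n).

(* pairs (p_n, p_{n+1}) with p_0 = 1, p_1 = 0, p_{n+1} = a_n p_n + p_{n-1} *)
Fixpoint cfp_pair (a : R) (n : nat) : nat * nat :=
  match n with
  | O => (1%nat, 0%nat)
  | S k => let (x, y) := cfp_pair a k in (y, (cf_digit a (S k) * y + x)%nat)
  end.
Definition cf_p (a : R) (n : nat) : nat := fst (cfp_pair a n).

Definition Lam (a : R) (n : nat) : R := INR (cf_q a n) * a - INR (cf_p a n).

Definition Psin (N : nat) (a : R) : R :=
  prodR (fun r => Rabs (2 * sin (PI * INR r * a))) N.

Definition irrational (a : R) : Prop :=
  ~ exists (p q : Z), q <> 0%Z /\ a = IZR p / IZR q.

Definition s_nt (a : R) (n t : nat) : R :=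
  2 * sin (PI * (INR t / INR (cf_q a n)
     - Rabs (Lam a n) * (frac_part (INR t * INR (cf_q a (n - 1)) / INR (cf_q a n)) - 1 / 2))).

Definition A_n (a : R) (n : nat) : R :=
  Rabs (2 * INR (cf_q a n) * sin (PI * Lam a n)).

Definition B_n (a : R) (n : nat) : R :=
  Rabs (prodR (fun t => s_nt a n t / (2 * sin (PI * INR t / INR (cf_q a n))))
              (cf_q a n - 1)).

Definition C_n (a : R) (n : nat) : R :=
  prodR (fun t => sqrt (1 - (s_nt a n 0) ^ 2 / (s_nt a n t) ^ 2)) (cf_q a n - 1).

From Pilot Require Import Defs.
From Stdlib Require Import Reals ZArith.
Open Scope R_scope.
From Stdlib Require Import Lra Lia List Permutation.
From mathcomp Require all_boot all_algebra Rstruct complex.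

(* Write alpha = (p + L) / q with q = q_n, p = p_n and L = Lambda_n.  Modulo pi,
   pi r alpha is pi (t + r L) / q with t = r p mod q, and r |-> t is a bijection
   from {1..q} onto {0..q-1} because q_{n-1} p_n = +-1 (mod q).  The residue
   t = 0 (r = q) contributes A_n / q.  For 0 < t < q the same congruence gives
   {t q_{n-1} / q} = r / q or 1 - r / q (according to the sign of L), so the
   factor is |2 sin pi (theta_t + L / 2)| where s_{nt} = 2 sin (pi theta_t).
   Since theta_{q-t} = 1 - theta_t, the factors of t and q - t multiply to
   s_{nt}^2 - s_{n0}^2, so their product is prod |s_{nt}| * C_n.  Finally
   prod_{0<t<q} 2 sin (pi t / q) = q, the modulus of prod_{0<t<q} (1 - w^t) for
   a primitive q-th root of unity w, turns prod |s_{nt}| into q B_n. *)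

Lemma prodR_ext (f g : nat -> R) N :
  (forall t, (1 <= t <= N)%nat -> f t = g t) -> prodR f N = prodR g N.
Proof.
  induction N as [|N IH]; intros Hfg; simpl; [reflexivity|].
  rewrite IH, Hfg; [reflexivity | lia | intros; apply Hfg; lia].
Qed.

Lemma prodR_mult (f g : nat -> R) N :
  prodR (fun t => f t * g t) N = prodR f N * prodR g N.
Proof. induction N as [|N IH]; simpl; [ring | rewrite IH; ring]. Qed.

Lemma prodR_Rabs (f : nat -> R) N : prodR (fun t => Rabs (f t)) N = Rabs (prodR f N).
Proof.
  induction N as [|N IH]; simpl; [now rewrite Rabs_R1 | now rewrite IH, Rabs_mult].
Qed.

Lemma prodR_inv (f : nat -> R) N : prodR (fun t => / f t) N = / prodR f N.
Proof.
  induction N as [|N IH]; simpl; [now rewrite Rinv_1 | now rewrite IH, Rinv_mult].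
Qed.

Lemma prodR_nonneg (f : nat -> R) N : (forall t, 0 <= f t) -> 0 <= prodR f N.
Proof. intros Hf; induction N; simpl; [lra | now apply Rmult_le_pos]. Qed.

Lemma fold_right_Rmult_init (l : list R) c :
  fold_right Rmult c l = fold_right Rmult 1 l * c.
Proof. induction l as [|a l IH]; simpl; [ring | rewrite IH; ring]. Qed.

Lemma prodR_seq (f : nat -> R) N :
  prodR f N = fold_right Rmult 1 (map f (seq 1 N)).
Proof.
  induction N as [|N IH]; [reflexivity|].
  rewrite seq_S, map_app, fold_right_app, fold_right_Rmult_init, <- IH. simpl.
  replace (1 + N)%nat with (S N) by lia. ring.
Qed.

Lemma fold_right_Rmult_perm (l l' : list R) :
  Permutation l l' -> fold_right Rmult 1 l = fold_right Rmult 1 l'.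
Proof. induction 1; simpl; [reflexivity | congruence | ring | congruence]. Qed.

Lemma prodR_reindex (f : nat -> R) (g : nat -> nat) m N :
  (forall r, (1 <= r <= N)%nat -> (m <= g r < m + N)%nat) ->
  (forall r1 r2, (1 <= r1 <= N)%nat -> (1 <= r2 <= N)%nat -> g r1 = g r2 -> r1 = r2) ->
  prodR (fun r => f (g r)) N = fold_right Rmult 1 (map f (seq m N)).
Proof.
  intros Hrange Hinj. rewrite prodR_seq, <- map_map.
  apply fold_right_Rmult_perm, Permutation_map, NoDup_Permutation_bis.
  - apply NoDup_map_NoDup_ForallPairs; [|apply seq_NoDup].
    intros r1 r2 H1 H2. apply in_seq in H1, H2. apply Hinj; lia.
  - now rewrite length_map, !length_seq.
  - intros t Ht. apply in_map_iff in Ht as [r [<- Hr]]. apply in_seq in Hr.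
    apply in_seq. specialize (Hrange r). lia.
Qed.

Definition chord (n t : nat) : R := 2 * sin (PI * INR t / INR n).

Lemma chord_pos n t : (0 < t < n)%nat -> 0 < chord n t.
Proof.
  intros Ht. unfold chord.
  assert (0 < INR t < INR n) by (split; [apply lt_0_INR | apply lt_INR]; lia).
  pose proof PI_RGT_0.
  assert (0 < PI * INR t / INR n < PI).
  { split; [apply Rdiv_lt_0_compat; nra|].
    apply Rmult_lt_reg_r with (INR n); [lra|].
    unfold Rdiv. rewrite Rmult_assoc, Rinv_l; nra. }
  enough (0 < sin (PI * INR t / INR n)) by lra. apply sin_gt_0; lra.
Qed.

Definition root_angle (n : nat) : R := 2 * PI / INR n.

Lemma chord_sqr n t : (0 < n)%nat ->
  Rsqr (1 - cos (INR t * root_angle n)) + Rsqr (sin (INR t * root_angle n))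
  = Rsqr (chord n t).
Proof.
  intros Hn. assert (INR n <> 0) by (apply not_0_INR; lia).
  unfold chord, root_angle.
  replace (INR t * (2 * PI / INR n)) with (2 * (PI * INR t / INR n)) by (field; auto).
  set (y := PI * INR t / INR n). rewrite cos_2a_sin, sin_2a.
  pose proof (sin2_cos2 y). unfold Rsqr in *. nra.
Qed.

Lemma cos_sin_root_angle n : (0 < n)%nat ->
  cos (INR n * root_angle n) = 1 /\ sin (INR n * root_angle n) = 0.
Proof.
  intros Hn. assert (INR n <> 0) by (apply not_0_INR; lia). unfold root_angle.
  replace (INR n * (2 * PI / INR n)) with (2 * PI) by (field; auto).
  split; [apply cos_2PI | apply sin_2PI].
Qed.

Module ChordProduct.
Import all_boot all_algebra Rstruct complex.
Import GRing.Theory Num.Theory ComplexField.Normc.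
Local Open Scope ring_scope.

Lemma prod_1_sub_prim_root_expr {F : fieldType} {n : nat} {z : F} :
  n.-primitive_root z -> \prod_(1 <= i < n) (1 - z ^+ i) = n%:R.
Proof.
move=> prim_z; have n_gt0 := prim_order_gt0 prim_z.
have geom : ('X^n - 1 : {poly F}) = ('X - 1) * \sum_(i < n) 'X ^+ (n.-1 - i) * 1 ^+ i.
  by rewrite -subrXX expr1n.
have X_sub_1_neq0 : ('X - 1%:P : {poly F}) != 0 by rewrite polyXsubC_eq0.
have := factor_Xn_sub_1 prim_z; rewrite big_ltn // expr0 geom.
move=> /(mulfI X_sub_1_neq0) /(congr1 (horner^~ 1)).
rewrite horner_prod horner_sum.
have sum_at_1 : \sum_(i < n) ('X^(n.-1 - i) * 1 ^+ i : {poly F}).[1] = n%:R.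
  rewrite (eq_bigr (fun _ => 1)) ?sumr_const ?card_ord // => i _.
  by rewrite expr1n mulr1 hornerXn expr1n.
rewrite sum_at_1 => <-; by apply: eq_bigr => i _; rewrite hornerXsubC.
Qed.

Definition cis (y : R) : R[i] := Complex (cos y) (sin y).

(* [Rmult] is written out so that these equations also rewrite the Stdlib
   terms of the statements outside this module. *)
Lemma cisX y k : cis y ^+ k = cis (Rmult (INR k) y).
Proof.
elim: k => [|k IH]; first by rewrite expr0 /cis Rmult_0_l cos_0 sin_0.
rewrite exprS IH /cis S_INR Rmult_plus_distr_r Rmult_1_l Rplus_comm cos_plus sin_plus.
by rewrite /= Rplus_comm.
Qed.

Lemma normc_1_sub_cis n t : (0 < n)%N ->
  normc (1 - cis (Rmult (INR t) (root_angle n))) = Rabs (chord n t).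
Proof.
move=> /ltP n_gt0.
rewrite /= -RsqrtE sub0r sqrrN -sqrt_Rsqr_abs -(chord_sqr n t n_gt0).
by rewrite !expr2.
Qed.

Lemma prim_root_cis {n} : (0 < n)%N -> n.-primitive_root (cis (root_angle n)).
Proof.
move=> n_gt0; apply/andP; split => //; apply/forallP => i; apply/eqP.
rewrite unity_rootE cisX; have [lt_in | ge_in] := ltnP i.+1 n.
  rewrite (ltn_eqF lt_in); apply/negbTE/eqP => cis_eq1.
  have := normc_1_sub_cis n i.+1 n_gt0; rewrite cis_eq1 subrr normc0.
  apply/nesym/Rabs_no_R0/Rgt_not_eq/chord_pos; split; exact/ltP.
have -> : i.+1 = n by apply/eqP; rewrite eqn_leq ge_in ltn_ord.
have [cos_1 sin_0] := cos_sin_root_angle n (elimT ltP n_gt0).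
by rewrite /cis cos_1 sin_0 eqxx; apply/eqP.
Qed.

Lemma prodR_big (f : nat -> R) N : prodR f N = \prod_(1 <= i < N.+1) f i.
Proof.
elim: N => [|N IH]; first by rewrite big_geq.
by rewrite big_nat_recr //= IH.
Qed.

Lemma prodR_chord n : (0 < n)%coq_nat -> prodR (chord n) (n - 1)%coq_nat = INR n.
Proof.
move=> /ltP n_gt0; rewrite prodR_big -/(subn n 1) subn1 prednK //.
rewrite (eq_big_nat _ _ (F2 := fun t => Rabs (chord n t))) => [|t /andP [t_gt0 t_lt_n]].
  have := congr1 (@normc _) (prod_1_sub_prim_root_expr (prim_root_cis n_gt0)).
  have normc_n : normc (n%:R : R[i]) = INR n.
    by rewrite -(rmorph_nat (real_complex R)) /= expr0n addr0 sqrtr_sqr ger0_norm ?INRE.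
  rewrite (big_morph (@normc _) (@normcM _) (@normc1 _)) normc_n => <-.
  by apply: eq_big_nat => t _; rewrite cisX normc_1_sub_cis.
by rewrite Rabs_pos_eq //; apply/Rlt_le/chord_pos; split; exact/ltP.
Qed.
End ChordProduct.

Lemma frac_part_INR n : frac_part (INR n) = 0.
Proof.
  symmetry. apply (Int_part_frac_part_spec _ (Z.of_nat n)); [lra|].
  rewrite <- INR_IZR_INZ. ring.
Qed.

Lemma frac_part_INR_div a q : (0 < q)%nat ->
  frac_part (INR a / INR q) = INR (a mod q) / INR q.
Proof.
  intros Hq. assert (0 < INR q) by now apply lt_0_INR.
  assert (INR (a mod q) < INR q) by (apply lt_INR, Nat.mod_upper_bound; lia).
  symmetry. apply (Int_part_frac_part_spec _ (Z.of_nat (a / q))).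
  - split; [apply Rmult_le_pos; [apply pos_INR | left; now apply Rinv_0_lt_compat]|].
    apply Rmult_lt_reg_r with (INR q); [lra|].
    unfold Rdiv. rewrite Rmult_assoc, Rinv_l; lra.
  - rewrite <- INR_IZR_INZ. rewrite (Nat.div_mod_eq a q) at 1.
    rewrite plus_INR, mult_INR. field. lra.
Qed.

Lemma mod_eq_sub_of_add a r q k : (0 < r < q)%nat -> (a + r = q * k)%nat ->
  a mod q = (q - r)%nat.
Proof.
  intros Hr Hk. symmetry. apply (Nat.mod_unique a q (k - 1)); [lia|].
  destruct k; [lia|]. nia.
Qed.

Lemma Rabs_sin_add_INR_mul_PI y k : Rabs (sin (y + INR k * PI)) = Rabs (sin y).
Proof.
  induction k as [|k IH]; [now rewrite Rmult_0_l, Rplus_0_r|].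
  rewrite S_INR, Rmult_plus_distr_r, Rmult_1_l, <- Rplus_assoc, neg_sin.
  now rewrite Rabs_Ropp.
Qed.

Lemma sin_add_mul_sin_sub a b : sin (a + b) * sin (a - b) = sin a ^ 2 - sin b ^ 2.
Proof.
  rewrite sin_plus, sin_minus. pose proof (sin2_cos2 a). pose proof (sin2_cos2 b).
  unfold Rsqr in *. nra.
Qed.

Lemma Rsqr_Rabs_mul_sqrt (a b : R) : b ^ 2 < a ^ 2 ->
  Rsqr (Rabs a * sqrt (1 - b ^ 2 / a ^ 2)) = a ^ 2 - b ^ 2.
Proof.
  intros Hab. assert (0 < a ^ 2) by (pose proof (pow2_ge_0 b); lra).
  assert (b ^ 2 / a ^ 2 < 1).
  { apply Rmult_lt_reg_r with (a ^ 2); [lra|].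
    unfold Rdiv. rewrite Rmult_assoc, Rinv_l; lra. }
  rewrite Rsqr_mult, Rsqr_sqrt by lra. rewrite <- Rsqr_abs, Rsqr_pow2.
  field. intros ->. simpl in *. lra.
Qed.

(* In the application q, q', p, p' and L are q_n, q_{n-1}, p_n, p_{n-1} and
   Lambda_n; [det_sign] is the determinant identity of consecutive convergents
   together with the sign of Lambda_n. *)
Section Factorisation.
Variables (alpha L : R) (q q' p p' : nat).
Hypothesis L_def : L = INR q * alpha - INR p.
Hypothesis q_pos : (0 < q)%nat.
Hypothesis qL_lt_1 : INR q * Rabs L < 1.
Hypothesis det_sign :
  ((q' * p = 1 + q * p')%nat /\ L < 0) \/ ((q' * p + 1 = q * p')%nat /\ 0 < L).

Definition frac_ratio (t : nat) : R := frac_part (INR t * INR q' / INR q).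
Definition s_angle (t : nat) : R := INR t / INR q - Rabs L * (frac_ratio t - 1 / 2).
Definition s_val (t : nat) : R := 2 * sin (PI * s_angle t).
Definition rp_mod (r : nat) : nat := (r * p) mod q.
Definition sine_factor (t : nat) : R := Rabs (2 * sin (PI * (s_angle t + L / 2))).

Lemma INR_q_pos : 0 < INR q.
Proof. now apply lt_0_INR. Qed.

Lemma INR_div_q_bounds r : (0 < r < q)%nat -> 0 < INR r / INR q < 1.
Proof.
  intros Hr. pose proof INR_q_pos.
  assert (0 < INR r < INR q) by (split; [apply lt_0_INR | apply lt_INR]; lia).
  split; [apply Rdiv_lt_0_compat; lra|].
  apply Rmult_lt_reg_r with (INR q); [lra|]. unfold Rdiv. rewrite Rmult_assoc, Rinv_l; lra.
Qed.

Lemma mul_p_mul_q'_mod r : (0 < r < q)%nat ->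
  (L < 0 /\ (r * p * q') mod q = r) \/ (0 < L /\ (r * p * q') mod q = (q - r)%nat).
Proof.
  intros Hr. destruct det_sign as [[D HL] | [D HL]]; [left | right]; split; auto.
  - replace (r * p * q')%nat with (r + r * p' * q)%nat by nia.
    rewrite Nat.Div0.mod_add. now apply Nat.mod_small.
  - apply (mod_eq_sub_of_add _ r q (r * p')); nia.
Qed.

Lemma frac_ratio_rp_mod r : (0 < r < q)%nat ->
  (L < 0 /\ frac_ratio (rp_mod r) = INR r / INR q) \/
  (0 < L /\ frac_ratio (rp_mod r) = 1 - INR r / INR q).
Proof.
  intros Hr. pose proof INR_q_pos. unfold frac_ratio, rp_mod.
  rewrite <- mult_INR, frac_part_INR_div, Nat.Div0.mul_mod_idemp_l by lia.
  destruct (mul_p_mul_q'_mod r Hr) as [[HL ->] | [HL ->]]; [left | right]; split; auto.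
  rewrite minus_INR by lia. field. lra.
Qed.

Lemma s_angle_rp_mod r : (0 < r < q)%nat ->
  s_angle (rp_mod r) + L / 2 = (INR (rp_mod r) + INR r * L) / INR q.
Proof.
  intros Hr. pose proof INR_q_pos. unfold s_angle.
  destruct (frac_ratio_rp_mod r Hr) as [[HL ->] | [HL ->]];
    [rewrite Rabs_left by lra | rewrite Rabs_right by lra]; field; lra.
Qed.

Lemma rp_mod_q : rp_mod q = 0%nat.
Proof. unfold rp_mod. rewrite Nat.mul_comm. apply Nat.Div0.mod_mul. Qed.

Lemma rp_mod_neq_0 r : (0 < r < q)%nat -> rp_mod r <> 0%nat.
Proof.
  intros Hr Hres. pose proof (INR_div_q_bounds r Hr).
  assert (frac_ratio 0 = 0) by (unfold frac_ratio; rewrite Rmult_0_l, Rdiv_0_l; apply fp_R0).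
  destruct (frac_ratio_rp_mod r Hr) as [[_ F] | [_ F]]; rewrite Hres in F; lra.
Qed.

Lemma rp_mod_inj r1 r2 : (1 <= r1 <= q)%nat -> (1 <= r2 <= q)%nat ->
  rp_mod r1 = rp_mod r2 -> r1 = r2.
Proof.
  intros H1 H2 E. pose proof rp_mod_q.
  destruct (Nat.eq_dec r1 q) as [-> | N1], (Nat.eq_dec r2 q) as [-> | N2]; auto.
  - exfalso; apply (rp_mod_neq_0 r2); [lia | congruence].
  - exfalso; apply (rp_mod_neq_0 r1); [lia | congruence].
  - assert (L <> 0) by (destruct det_sign as [[_ HL] | [_ HL]]; lra).
    pose proof INR_q_pos.
    pose proof (s_angle_rp_mod r1 ltac:(lia)) as T1.
    pose proof (s_angle_rp_mod r2 ltac:(lia)) as T2.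
    rewrite E, T2 in T1. apply INR_eq, (Rmult_eq_reg_r L); [|assumption].
    apply (Rmult_eq_compat_r (INR q)) in T1. field_simplify in T1; lra.
Qed.

Lemma Rabs_sin_PI_mul_alpha r :
  Rabs (sin (PI * INR r * alpha)) = Rabs (sin (PI * ((INR (rp_mod r) + INR r * L) / INR q))).
Proof.
  pose proof INR_q_pos. pose proof (Nat.div_mod_eq (r * p) q) as E. fold (rp_mod r) in E.
  apply (f_equal INR) in E. rewrite mult_INR, plus_INR, mult_INR in E.
  rewrite <- (Rabs_sin_add_INR_mul_PI (PI * ((INR (rp_mod r) + INR r * L) / INR q))
                                     ((r * p) / q)).
  do 2 f_equal.
  replace (INR (rp_mod r)) with (INR r * INR p - INR q * INR ((r * p) / q)) by lra.
  rewrite L_def. field. lra.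
Qed.

Lemma Psin_split :
  Psin q alpha = Rabs (2 * sin (PI * L)) * prodR sine_factor (q - 1).
Proof.
  pose proof INR_q_pos. unfold Psin.
  set (h t := match t with O => Rabs (2 * sin (PI * L)) | S _ => sine_factor t end).
  rewrite (prodR_ext _ (fun r => h (rp_mod r))).
  2:{ intros r Hr. rewrite !Rabs_mult, Rabs_sin_PI_mul_alpha.
      destruct (Nat.eq_dec r q) as [-> | Hrq].
      - rewrite rp_mod_q. simpl h. rewrite Rabs_mult. do 3 f_equal. simpl. field. lra.
      - pose proof (rp_mod_neq_0 r ltac:(lia)) as Hnz.
        destruct (rp_mod r) as [|t] eqn:Ht; [contradiction|].
        unfold h, sine_factor. rewrite <- Ht, s_angle_rp_mod, Rabs_mult by lia. reflexivity. }
  rewrite (prodR_reindex h rp_mod 0 q).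
  - replace (seq 0 q) with (0%nat :: seq 1 (q - 1))
      by (destruct q; [lia | simpl; now rewrite Nat.sub_0_r]).
    simpl. rewrite <- prodR_seq. f_equal. apply prodR_ext. now intros [|t].
  - intros r _. unfold rp_mod. pose proof (Nat.mod_upper_bound (r * p) q). lia.
  - exact rp_mod_inj.
Qed.

Lemma frac_ratio_pos t : (0 < t < q)%nat -> 0 < frac_ratio t.
Proof.
  intros Ht. pose proof INR_q_pos. unfold frac_ratio.
  rewrite <- mult_INR, frac_part_INR_div by lia.
  apply Rdiv_lt_0_compat; [apply lt_0_INR | lra].
  enough ((t * q') mod q <> 0)%nat by lia. intros Hz.
  assert (Hz' : ((t * q') mod q * p) mod q = 0%nat) by (rewrite Hz; apply Nat.Div0.mod_0_l).
  rewrite Nat.Div0.mul_mod_idemp_l in Hz'.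
  replace (t * q' * p)%nat with (t * p * q')%nat in Hz' by ring.
  destruct (mul_p_mul_q'_mod t Ht) as [[_ E] | [_ E]]; lia.
Qed.

Lemma s_angle_reflect t : (0 < t < q)%nat -> s_angle (q - t) = 1 - s_angle t.
Proof.
  intros Ht. pose proof INR_q_pos. pose proof (frac_ratio_pos t Ht).
  assert (F : frac_ratio (q - t) = 1 - frac_ratio t).
  { unfold frac_ratio in *. rewrite minus_INR by lia.
    replace ((INR q - INR t) * INR q' / INR q) with (INR q' - INR t * INR q' / INR q)
      by (field; lra).
    rewrite Rminus_fp2, frac_part_INR; [ring | now rewrite frac_part_INR]. }
  unfold s_angle. rewrite F, minus_INR by lia. field. lra.
Qed.

Lemma s_val_0 : s_val 0 = 2 * sin (PI * (Rabs L / 2)).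
Proof.
  unfold s_val, s_angle, frac_ratio. simpl INR.
  rewrite Rmult_0_l, !Rdiv_0_l, fp_R0. do 3 f_equal. field.
Qed.

Lemma s_angle_bounds t : (0 < t < q)%nat ->
  0 < s_angle t - Rabs L / 2 /\ s_angle t + Rabs L / 2 < 1.
Proof.
  intros Ht. pose proof INR_q_pos. pose proof (Rabs_pos L).
  assert (1 <= INR t <= INR q - 1).
  { rewrite <- INR_1, <- minus_INR by lia. split; apply le_INR; lia. }
  destruct (base_fp (INR t * INR q' / INR q)) as [F0 F1]. fold (frac_ratio t) in F0, F1.
  unfold s_angle.
  replace (INR t / INR q - Rabs L * (frac_ratio t - 1 / 2) - Rabs L / 2)
    with ((INR t - INR q * Rabs L * frac_ratio t) / INR q) by (field; lra).
  replace (INR t / INR q - Rabs L * (frac_ratio t - 1 / 2) + Rabs L / 2)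
    with (1 - (INR q - INR t - INR q * Rabs L * (1 - frac_ratio t)) / INR q) by (field; lra).
  split; [|enough (0 < (INR q - INR t - INR q * Rabs L * (1 - frac_ratio t)) / INR q) by lra];
    apply Rdiv_lt_0_compat; nra.
Qed.

Lemma s_val_0_sqr_lt t : (0 < t < q)%nat -> s_val 0 ^ 2 < s_val t ^ 2.
Proof.
  intros Ht. destruct (s_angle_bounds t Ht). pose proof PI_RGT_0. pose proof (Rabs_pos L).
  assert (0 < sin (PI * s_angle t + PI * (Rabs L / 2))) by (apply sin_gt_0; nra).
  assert (0 < sin (PI * s_angle t - PI * (Rabs L / 2))) by (apply sin_gt_0; nra).
  pose proof (sin_add_mul_sin_sub (PI * s_angle t) (PI * (Rabs L / 2))).
  rewrite s_val_0. unfold s_val. nra.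
Qed.

Lemma sine_factor_mul_reflect t : (0 < t < q)%nat ->
  sine_factor t * sine_factor (q - t) = s_val t ^ 2 - s_val 0 ^ 2.
Proof.
  intros Ht. pose proof (s_val_0_sqr_lt t Ht) as Hlt. unfold sine_factor.
  rewrite s_angle_reflect by assumption.
  replace (PI * (1 - s_angle t + L / 2)) with (PI - (PI * s_angle t - PI * (L / 2))) by ring.
  replace (PI * (s_angle t + L / 2)) with (PI * s_angle t + PI * (L / 2)) by ring.
  rewrite sin_PI_x, <- Rabs_mult.
  set (a := PI * s_angle t). set (b := PI * (L / 2)).
  replace (2 * sin (a + b) * (2 * sin (a - b))) with (4 * (sin (a + b) * sin (a - b))) by ring.
  rewrite sin_add_mul_sin_sub.
  assert (Hb : sin b ^ 2 = sin (PI * (Rabs L / 2)) ^ 2).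
  { unfold b. destruct (Rcase_abs L); [rewrite Rabs_left | rewrite Rabs_right]; try lra.
    replace (PI * (- L / 2)) with (- (PI * (L / 2))) by field. rewrite sin_neg. ring. }
  rewrite Hb. rewrite s_val_0 in Hlt |- *. unfold s_val, a in *.
  rewrite Rabs_right; [ring | nra].
Qed.

Lemma prodR_sine_factor :
  prodR sine_factor (q - 1) =
  prodR (fun t => Rabs (s_val t)) (q - 1) *
  prodR (fun t => sqrt (1 - s_val 0 ^ 2 / s_val t ^ 2)) (q - 1).
Proof.
  rewrite <- prodR_mult. apply Rsqr_inj.
  - apply prodR_nonneg. intros; apply Rabs_pos.
  - apply prodR_nonneg. intros; apply Rmult_le_pos; [apply Rabs_pos | apply sqrt_pos].
  - assert (Hreflect :
      prodR (fun t => sine_factor (q - t)) (q - 1) = prodR sine_factor (q - 1)).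
    { rewrite (prodR_seq sine_factor).
      apply (prodR_reindex _ (fun t => q - t)%nat); intros; lia. }
    unfold Rsqr at 1. rewrite <- Hreflect at 2. rewrite <- prodR_mult.
    unfold Rsqr. rewrite <- prodR_mult. apply prodR_ext. intros t Ht.
    rewrite sine_factor_mul_reflect by lia.
    symmetry. apply Rsqr_Rabs_mul_sqrt, s_val_0_sqr_lt. lia.
Qed.

Theorem Psin_factorisation :
  Psin q alpha =
  Rabs (2 * INR q * sin (PI * L)) *
  Rabs (prodR (fun t => s_val t / chord q t) (q - 1)) *
  prodR (fun t => sqrt (1 - s_val 0 ^ 2 / s_val t ^ 2)) (q - 1).
Proof.
  pose proof INR_q_pos.
  rewrite Psin_split, prodR_sine_factor. unfold Rdiv.
  rewrite prodR_mult, prodR_inv, (ChordProduct.prodR_chord q q_pos).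
  rewrite prodR_Rabs, !Rabs_mult, Rabs_inv, (Rabs_right (INR q)) by lra.
  field. lra.
Qed.

End Factorisation.

Section ContinuedFraction.
Variable alpha : R.
Hypotheses (alpha_pos : 0 < alpha) (alpha_lt_1 : alpha < 1) (alpha_irr : irrational alpha).

Local Notation x := (cf_rest alpha).
Local Notation a := (cf_digit alpha).
Local Notation q := (cf_q alpha).
Local Notation p := (cf_p alpha).
Local Notation Lam := (Lam alpha).

Lemma cf_q_SS n : q (S (S n)) = (a (S n) * q (S n) + q n)%nat.
Proof. unfold cf_q. simpl. now destruct (cfq_pair alpha n). Qed.

Lemma cf_p_SS n : p (S (S n)) = (a (S n) * p (S n) + p n)%nat.
Proof. unfold cf_p. simpl. now destruct (cfp_pair alpha n). Qed.

Lemma Lam_SS n : Lam (S (S n)) = INR (a (S n)) * Lam (S n) + Lam n.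
Proof. unfold Defs.Lam. rewrite cf_q_SS, cf_p_SS, !plus_INR, !mult_INR. ring. Qed.

Lemma cf_rest_lt_1 m : x m < 1.
Proof. destruct m; simpl; [assumption | destruct (base_fp (/ x m)); lra]. Qed.

Lemma Int_part_inv_cf_rest_ge_1 m : 0 < x m -> (1 <= Int_part (/ x m))%Z.
Proof.
  intros Hx. pose proof (cf_rest_lt_1 m).
  assert (1 < / x m) by (rewrite <- Rinv_1; apply Rinv_lt_contravar; lra).
  destruct (base_Int_part (/ x m)).
  assert (Hpos : IZR 0 < IZR (Int_part (/ x m))) by (simpl; lra).
  apply lt_IZR in Hpos. lia.
Qed.

Lemma cf_digit_eq m : 0 < x m -> INR (a (S m)) = / x m - x (S m).
Proof.
  intros Hx. pose proof (Int_part_inv_cf_rest_ge_1 m Hx).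
  unfold cf_digit. rewrite Nat.sub_succ, Nat.sub_0_r, INR_IZR_INZ, Z2Nat.id by lia.
  simpl. unfold frac_part. ring.
Qed.

Lemma cf_digit_ge_1 m : 0 < x m -> (1 <= a (S m))%nat.
Proof.
  intros Hx. pose proof (Int_part_inv_cf_rest_ge_1 m Hx).
  unfold cf_digit. rewrite Nat.sub_succ, Nat.sub_0_r. lia.
Qed.

Lemma Lam_S_of_pos m : (forall j, (j < m)%nat -> 0 < x j) -> Lam (S m) = - x m * Lam m.
Proof.
  induction m as [|m IH]; intros Hpos.
  - unfold Defs.Lam, cf_q, cf_p. simpl. ring.
  - assert (0 < x m) by (apply Hpos; lia).
    rewrite Lam_SS, cf_digit_eq, IH by (try intros; apply Hpos; lia).
    field. lra.
Qed.

Lemma cf_q_S_pos_of_pos m : (forall j, (j < m)%nat -> 0 < x j) -> (1 <= q (S m))%nat.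
Proof.
  induction m as [|m IH]; intros Hpos; [unfold cf_q; simpl; lia|].
  rewrite cf_q_SS. pose proof (cf_digit_ge_1 m (Hpos m ltac:(lia))).
  assert (1 <= q (S m))%nat by (apply IH; intros; apply Hpos; lia). nia.
Qed.

Lemma cf_rest_pos m : 0 < x m.
Proof.
  enough (Hall : forall j, (j <= m)%nat -> 0 < x j) by (apply Hall; lia).
  induction m as [|m IH]; intros j Hj.
  - replace j with 0%nat by lia. exact alpha_pos.
  - destruct (Nat.eq_dec j (S m)) as [-> | Hne]; [|apply IH; lia].
    destruct (base_fp (/ x m)) as [Hge _]. simpl.
    destruct (Rle_lt_or_eq_dec 0 (frac_part (/ x m))) as [Hlt | Heq]; [lra | exact Hlt|].
    exfalso. apply alpha_irr.
    assert (Hpos : forall j, (j < S m)%nat -> 0 < x j) by (intros; apply IH; lia).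
    assert (HL : Lam (S (S m)) = 0).
    { rewrite Lam_S_of_pos by (intros; apply Hpos; lia). simpl. rewrite <- Heq. ring. }
    pose proof (cf_q_S_pos_of_pos (S m) Hpos).
    exists (Z.of_nat (p (S (S m)))), (Z.of_nat (q (S (S m)))). split; [lia|].
    rewrite <- !INR_IZR_INZ. unfold Defs.Lam in HL.
    assert (0 < INR (q (S (S m)))) by (apply lt_0_INR; lia).
    field_simplify_eq; lra.
Qed.

Lemma Lam_S m : Lam (S m) = - x m * Lam m.
Proof. apply Lam_S_of_pos. intros; apply cf_rest_pos. Qed.

Lemma cf_q_S_pos m : (0 < q (S m))%nat.
Proof. apply cf_q_S_pos_of_pos. intros; apply cf_rest_pos. Qed.

Lemma cf_q_S_le m : (q (S m) <= q (S (S m)))%nat.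
Proof. rewrite cf_q_SS. pose proof (cf_digit_ge_1 m (cf_rest_pos m)). nia. Qed.

Lemma cf_det_sign m :
  ((q m * p (S m) = 1 + q (S m) * p m)%nat /\ Lam (S m) < 0) \/
  ((q m * p (S m) + 1 = q (S m) * p m)%nat /\ 0 < Lam (S m)).
Proof.
  induction m as [|m IH].
  - right. unfold Defs.Lam, cf_q, cf_p. simpl. split; [reflexivity | lra].
  - rewrite Lam_S, cf_q_SS, cf_p_SS. pose proof (cf_rest_pos (S m)).
    destruct IH as [[D HL] | [D HL]]; [right | left]; split; [nia | nra | nia | nra].
Qed.

Lemma cf_q_Rabs_Lam_cross m :
  INR (q (S (S m))) * Rabs (Lam (S m)) + INR (q (S m)) * Rabs (Lam (S (S m))) = 1.
Proof.
  assert (Hdiff : INR (q (S (S m))) * Lam (S m) - INR (q (S m)) * Lam (S (S m))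
    = INR (q (S m)) * INR (p (S (S m))) - INR (q (S (S m))) * INR (p (S m)))
    by (unfold Defs.Lam; ring).
  pose proof (Lam_S (S m)) as Hrec. pose proof (cf_rest_pos (S m)) as Hx.
  destruct (cf_det_sign (S m)) as [[D HL] | [D HL]]; apply (f_equal INR) in D;
    rewrite ?plus_INR, !mult_INR in D; simpl in D.
  - assert (0 < Lam (S m)) by nra.
    rewrite (Rabs_right (Lam (S m))), (Rabs_left (Lam (S (S m)))) by lra. lra.
  - assert (Lam (S m) < 0) by nra.
    rewrite (Rabs_left (Lam (S m))), (Rabs_right (Lam (S (S m)))) by lra. lra.
Qed.

Lemma cf_q_mul_Rabs_Lam_lt_1 n : (1 <= n)%nat -> INR (q n) * Rabs (Lam n) < 1.
Proof.
  intros Hn. destruct n as [|m]; [lia|].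
  pose proof (cf_q_Rabs_Lam_cross m). pose proof (le_INR _ _ (cf_q_S_le m)).
  pose proof (lt_0_INR _ (cf_q_S_pos m)).
  assert (0 < Rabs (Lam (S (S m)))).
  { apply Rabs_pos_lt. destruct (cf_det_sign (S m)) as [[_ HL] | [_ HL]]; lra. }
  pose proof (Rabs_pos (Lam (S m))). nra.
Qed.

End ContinuedFraction.

Theorem lemma3p1 (alpha : R) (h0 : 0 < alpha) (h1 : alpha < 1)
  (hirr : irrational alpha) (n : nat) (hn : (1 <= n)%nat) :
  Psin (cf_q alpha n) alpha = A_n alpha n * B_n alpha n * C_n alpha n.
Proof.
  destruct n as [|m]; [lia|].
  unfold A_n, B_n, C_n, s_nt. rewrite Nat.sub_succ, Nat.sub_0_r.
  apply (Psin_factorisation alpha _ _ (cf_q alpha m) (cf_p alpha (S m)) (cf_p alpha m)).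
  - reflexivity.
  - apply cf_q_S_pos; assumption.
  - apply cf_q_mul_Rabs_Lam_lt_1; assumption.
  - apply cf_det_sign; assumption.
Qed.
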